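(* Let $q>0$ and $s>0$. For $n\in\mathbb{N}=\{1,2,3,\dots\}$ put \[ n_q:=\frac{\Gamma(nq+1)}{\Gamma((n-1)q+1)}, \] and put $0_q:=0$. Then the series \[ \sum_{n=0}^{\infty}e^{-s\,n_q} \] converges, i.e. $\sum_{n=0}^{\infty}e^{-s\,n_q}<\infty$.
   Context: $\Gamma$ denotes the Euler Gamma function, $\Gamma(z)=\int_0^\infty t^{z-1}e^{-t}\,dt$ for $\operatorname{Re} z>0$. The numbers $n_q$ are the eigenvalues of the operator $a^\dagger a$ on the Mittag-Leffler Fock space of the slitted plane. In that space the eigenvalue corresponding to $n=0$ is $0$. *)

From Stdlib Require Import Reals.
From Coquelicot Require Import Coquelicot.
Open Scope R_scope.

Definition Gamma (z : R) : R :=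
  RInt_gen (fun t => Rpower t (z - 1) * exp (- t))
           (at_right 0) (Rbar_locally p_infty).

Definition nq (q : R) (n : nat) : R :=
  match n with
  | O => 0
  | S m => Gamma (INR (S m) * q + 1) / Gamma (INR m * q + 1)
  end.

From Stdlib Require Import Reals Lra Lia Classical.
From Coquelicot Require Import Coquelicot.
Open Scope R_scope.

(* The ratio n_q = Gamma(x + q) / Gamma(x), x = (n-1) q + 1, grows at least like a
   constant times n^q.  Indeed, with p = x - 1 = 2A, at most half of the mass of
   t^(2A) e^(-t) lies in (0, A] (translating by A does not decrease the integrand,
   since 2^(2A) >= e^A), and on [A, oo) the extra factor t^q is at least A^q.
   Hence e^(-s n_q) <= e^(-b n^q) for some b > 0, and since n^2 e^(-b n^q) is
   bounded the series is dominated by a telescoping series.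
   Gamma is handled through the supremum of its integrals over compact
   subintervals of (0, oo): the integrand is positive and at most C e^(-t/2). *)

Lemma exp_le_compat x y : x <= y -> exp x <= exp y.
Proof. intros [Hlt | ->]; [now left; apply exp_increasing | lra]. Qed.

Lemma ln_le_div_add_ln c y : 0 < c -> 0 < y -> ln y <= y / c + ln c - 1.
Proof.
  intros Hc Hy.
  assert (Hyc : 0 < y / c) by (apply Rdiv_lt_0_compat; lra).
  pose proof (exp_ineq1_le (ln (y / c))) as Hexp.
  rewrite exp_ln in Hexp by exact Hyc.
  rewrite ln_div in Hexp by assumption.
  lra.
Qed.

Section NonnegativeImproperIntegral.

Variable f : R -> R.
Hypothesis f_ex_RInt : forall a b, 0 < a -> 0 < b -> ex_RInt f a b.
Hypothesis f_ge0 : forall t, 0 < t -> 0 <= f t.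

Definition partial_integrals (v : R) : Prop :=
  exists a b, 0 < a <= b /\ v = RInt f a b.

Lemma RInt_nonneg a b : 0 < a <= b -> 0 <= RInt f a b.
Proof.
  intros Hab. apply RInt_ge_0; [lra | apply f_ex_RInt; lra |].
  intros t Ht. apply f_ge0. lra.
Qed.

Lemma RInt_le_superinterval a a' b' b :
  0 < a <= a' -> a' <= b' -> b' <= b -> RInt f a' b' <= RInt f a b.
Proof.
  intros Ha Hab' Hb.
  rewrite <- (RInt_Chasles f a a' b), <- (RInt_Chasles f a' b' b)
    by (apply f_ex_RInt; lra).
  pose proof (RInt_nonneg a a'). pose proof (RInt_nonneg b' b).
  unfold plus; simpl. lra.
Qed.

Lemma is_RInt_gen_lub l :
  is_lub partial_integrals l -> is_RInt_gen f (at_right 0) (Rbar_locally p_infty) l.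
Proof.
  intros [Hub Hleast].
  apply (filterlimi_lim_ext_loc (fun ab => RInt f (fst ab) (snd ab))).
  { apply (Filter_prod _ _ _ (fun a => 0 < a) (fun b => 0 < b)).
    - exists (mkposreal 1 Rlt_0_1). now intros.
    - exists 0. now intros.
    - intros a b Ha Hb.
      apply (@RInt_correct R_CompleteNormedModule), f_ex_RInt; assumption. }
  apply filterlim_locally. intros eps.
  assert (Happrox : exists v, partial_integrals v /\ l - eps < v).
  { apply NNPP. intros Hnone.
    assert (l <= l - eps) by
      (apply Hleast; intros v Hv; apply Rnot_lt_le; intros Hlt; apply Hnone; now exists v).
    destruct eps; simpl in *; lra. }
  destruct Happrox as [v [[a0 [b0 [Hab0 ->]]] Hv]].
  apply (Filter_prod _ _ _ (fun a => 0 < a < a0) (fun b => b0 < b)).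
  - exists (mkposreal a0 (proj1 Hab0)). intros a Ha Hpos. split; [exact Hpos |].
    change (Rabs (a - 0) < a0) in Ha. apply Rabs_def2 in Ha. lra.
  - exists b0. now intros.
  - intros a b Ha Hb. simpl.
    assert (RInt f a b <= l) by (apply Hub; exists a, b; split; [lra | reflexivity]).
    assert (RInt f a0 b0 <= RInt f a b) by (apply RInt_le_superinterval; lra).
    change (Rabs (RInt f a b - l) < eps).
    apply Rabs_def1; destruct eps; simpl in *; lra.
Qed.

Lemma RInt_gen_is_lub :
  bound partial_integrals ->
  is_lub partial_integrals (RInt_gen f (at_right 0) (Rbar_locally p_infty)).
Proof.
  intros Hbound.
  destruct (completeness partial_integrals) as [l Hl]; [exact Hbound | |].
  { exists (RInt f 1 1), 1, 1. split; [lra | reflexivity]. }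
  now rewrite (is_RInt_gen_unique f l (is_RInt_gen_lub l Hl)).
Qed.

End NonnegativeImproperIntegral.

Definition gamma_integrand (p t : R) : R := Rpower t p * exp (- t).

Lemma gamma_integrand_eq p t : gamma_integrand p t = exp (p * ln t - t).
Proof. unfold gamma_integrand, Rpower. now rewrite <- exp_plus. Qed.

Lemma gamma_integrand_pos p t : 0 < gamma_integrand p t.
Proof. apply Rmult_lt_0_compat; [apply exp_pos | apply exp_pos]. Qed.

Lemma gamma_integrand_continuous p t : 0 < t -> continuous (gamma_integrand p) t.
Proof.
  intros Ht. apply (@ex_derive_continuous R_AbsRing R_NormedModule).
  unfold gamma_integrand, Rpower. auto_derive. exact Ht.
Qed.

Lemma ex_RInt_gamma_integrand p a b : 0 < a -> 0 < b -> ex_RInt (gamma_integrand p) a b.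
Proof.
  intros Ha Hb. apply (@ex_RInt_continuous R_CompleteNormedModule). intros t [Ht _].
  apply gamma_integrand_continuous.
  eapply Rlt_le_trans; [| exact Ht]. now apply Rmin_glb_lt.
Qed.

Lemma RInt_gamma_integrand_ge0 p a b : 0 < a <= b -> 0 <= RInt (gamma_integrand p) a b.
Proof.
  apply RInt_nonneg; [apply ex_RInt_gamma_integrand |].
  intros t _. apply Rlt_le, gamma_integrand_pos.
Qed.

Lemma RInt_gamma_integrand_le_superinterval p a a' b' b :
  0 < a <= a' -> a' <= b' -> b' <= b ->
  RInt (gamma_integrand p) a' b' <= RInt (gamma_integrand p) a b.
Proof.
  apply RInt_le_superinterval; [apply ex_RInt_gamma_integrand |].
  intros t _. apply Rlt_le, gamma_integrand_pos.
Qed.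

Lemma gamma_integrand_le_exp_half p :
  0 <= p -> exists C, forall t, 0 < t -> gamma_integrand p t <= C * exp (- (t / 2)).
Proof.
  intros Hp. set (K := Rabs ((p + 1) * (ln (2 * (p + 1)) - 1))).
  exists (exp K). intros t Ht.
  rewrite gamma_integrand_eq, <- exp_plus. apply exp_le_compat.
  assert (Habs := Rle_abs ((p + 1) * (ln (2 * (p + 1)) - 1))).
  assert (HK := Rabs_pos ((p + 1) * (ln (2 * (p + 1)) - 1))).
  fold K in Habs, HK.
  destruct (Rle_lt_dec t 1) as [Ht1 | Ht1].
  - assert (ln t <= 0) by (rewrite <- ln_1; apply ln_le; lra). nra.
  - assert (0 <= ln t) by (rewrite <- ln_1; apply ln_le; lra).
    pose proof (ln_le_div_add_ln (2 * (p + 1)) t ltac:(lra) Ht) as Hln.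
    assert (Hmul : (p + 1) * ln t <= (p + 1) * (t / (2 * (p + 1)) + ln (2 * (p + 1)) - 1))
      by (apply Rmult_le_compat_l; lra).
    replace ((p + 1) * (t / (2 * (p + 1)) + ln (2 * (p + 1)) - 1))
      with (t / 2 + (p + 1) * (ln (2 * (p + 1)) - 1)) in Hmul by (field; lra).
    nra.
Qed.

Lemma RInt_exp_half_le C a b :
  0 <= C -> 0 <= a <= b -> RInt (fun t => C * exp (- (t / 2))) a b <= 2 * C.
Proof.
  intros HC Hab.
  set (F t := - 2 * C * exp (- (t / 2))).
  assert (HF : is_RInt (fun t => C * exp (- (t / 2))) a b (F b - F a)).
  { apply (is_RInt_derive F).
    - intros t _. unfold F. auto_derive; [exact I | unfold Rdiv; field].
    - intros t _. apply (@ex_derive_continuous R_AbsRing R_NormedModule). auto_derive. exact I. }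
  rewrite (is_RInt_unique _ _ _ _ HF). unfold F.
  assert (exp (- (a / 2)) <= 1) by (rewrite <- exp_0; apply exp_le_compat; lra).
  pose proof (exp_pos (- (b / 2))). nra.
Qed.

Lemma partial_integrals_gamma_bound p :
  0 <= p -> bound (partial_integrals (gamma_integrand p)).
Proof.
  intros Hp. destruct (gamma_integrand_le_exp_half p Hp) as [C HC].
  assert (HC0 : 0 <= C).
  { specialize (HC 1 Rlt_0_1).
    pose proof (gamma_integrand_pos p 1). pose proof (exp_pos (- (1 / 2))). nra. }
  exists (2 * C). intros v [a [b [Hab ->]]].
  eapply Rle_trans; [| apply (RInt_exp_half_le C a b); lra].
  apply RInt_le; [lra | apply ex_RInt_gamma_integrand; lra | |].
  - apply (@ex_RInt_continuous R_CompleteNormedModule). intros t _.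
    apply (@ex_derive_continuous R_AbsRing R_NormedModule). auto_derive. exact I.
  - intros t Ht. apply HC. lra.
Qed.

Lemma Gamma_is_lub z :
  1 <= z -> is_lub (partial_integrals (gamma_integrand (z - 1))) (Gamma z).
Proof.
  intros Hz. apply RInt_gen_is_lub.
  - apply ex_RInt_gamma_integrand.
  - intros t _. apply Rlt_le, gamma_integrand_pos.
  - apply partial_integrals_gamma_bound. lra.
Qed.

Lemma RInt_le_Gamma z a b :
  1 <= z -> 0 < a <= b -> RInt (gamma_integrand (z - 1)) a b <= Gamma z.
Proof. intros Hz Hab. apply (Gamma_is_lub z Hz). now exists a, b. Qed.

Lemma Gamma_le z M :
  1 <= z -> (forall a b, 0 < a <= b -> RInt (gamma_integrand (z - 1)) a b <= M) ->
  Gamma z <= M.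
Proof. intros Hz HM. apply (Gamma_is_lub z Hz). intros v [a [b [Hab ->]]]. auto. Qed.

Lemma Gamma_pos z : 1 <= z -> 0 < Gamma z.
Proof.
  intros Hz. apply Rlt_le_trans with (RInt (gamma_integrand (z - 1)) 1 2).
  - apply RInt_gt_0; [lra | intros; apply gamma_integrand_pos |].
    intros t Ht. apply gamma_integrand_continuous. lra.
  - apply RInt_le_Gamma; lra.
Qed.

Lemma gamma_integrand_le_shift A x :
  0 < x < A -> gamma_integrand (2 * A) x <= gamma_integrand (2 * A) (x + A).
Proof.
  intros Hx. rewrite !gamma_integrand_eq. apply exp_le_compat.
  assert (Hln : ln (2 * x) <= ln (x + A)) by (apply ln_le; lra).
  rewrite ln_mult in Hln by lra.
  (* [A <= 2 A ln 2] is [e^A <= 2^(2A)] *)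
  pose proof ln_lt_2.
  assert (2 * A * (ln 2 + ln x) <= 2 * A * ln (x + A)) by (apply Rmult_le_compat_l; lra).
  nra.
Qed.

Lemma RInt_gamma_integrand_le_shift A a :
  0 < a < A ->
  RInt (gamma_integrand (2 * A)) a A <= RInt (gamma_integrand (2 * A)) (a + A) (2 * A).
Proof.
  intros Ha.
  assert (Hex : ex_RInt (gamma_integrand (2 * A)) (1 * a + A) (1 * A + A))
    by (apply ex_RInt_gamma_integrand; lra).
  replace (RInt _ (a + A) (2 * A))
    with (RInt (gamma_integrand (2 * A)) (1 * a + A) (1 * A + A)) by (f_equal; ring).
  rewrite <- (RInt_comp_lin _ 1 A a A Hex).
  apply RInt_le; [lra | apply ex_RInt_gamma_integrand; lra | |].
  - exact (@ex_RInt_comp_lin R_CompleteNormedModule _ 1 A a A Hex).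
  - intros x Hx.
    change (gamma_integrand (2 * A) x <= 1 * gamma_integrand (2 * A) (1 * x + A)).
    rewrite !Rmult_1_l. apply gamma_integrand_le_shift. lra.
Qed.

Lemma RInt_gamma_integrand_le_twice_tail A a B :
  0 < A -> 0 < a <= B -> 2 * A <= B ->
  RInt (gamma_integrand (2 * A)) a B <= 2 * RInt (gamma_integrand (2 * A)) A B.
Proof.
  intros HA Ha HB.
  pose proof (RInt_gamma_integrand_ge0 (2 * A) A B ltac:(lra)).
  destruct (Rle_lt_dec A a) as [HAa | HaA].
  - pose proof (RInt_gamma_integrand_le_superinterval (2 * A) A a B B
      ltac:(lra) ltac:(lra) ltac:(lra)).
    lra.
  - rewrite <- (RInt_Chasles _ a A B) by (apply ex_RInt_gamma_integrand; lra).
    pose proof (RInt_gamma_integrand_le_shift A a ltac:(lra)).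
    pose proof (RInt_gamma_integrand_le_superinterval (2 * A) A (a + A) (2 * A) B
      ltac:(lra) ltac:(lra) ltac:(lra)).
    unfold plus; simpl. lra.
Qed.

Lemma Rpower_mul_gamma_integrand_le A p q x :
  0 < A -> 0 <= q -> A <= x ->
  Rpower A q * gamma_integrand p x <= gamma_integrand (p + q) x.
Proof.
  intros HA Hq Hx.
  replace (gamma_integrand (p + q) x) with (Rpower x q * gamma_integrand p x)
    by (unfold gamma_integrand; rewrite Rpower_plus; ring).
  apply Rmult_le_compat_r; [apply Rlt_le, gamma_integrand_pos |].
  apply Rle_Rpower_l; lra.
Qed.

Lemma Rpower_mul_RInt_gamma_integrand_le A p q B :
  0 < A <= B -> 0 <= q ->
  Rpower A q * RInt (gamma_integrand p) A B <= RInt (gamma_integrand (p + q)) A B.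
Proof.
  intros HAB Hq.
  assert (Hex : ex_RInt (gamma_integrand p) A B) by (apply ex_RInt_gamma_integrand; lra).
  rewrite <- (@RInt_scal R_CompleteNormedModule _ _ _ _ Hex).
  apply RInt_le; [lra | exact (@ex_RInt_scal R_CompleteNormedModule _ _ _ _ Hex)
    | apply ex_RInt_gamma_integrand; lra |].
  intros x Hx. apply Rpower_mul_gamma_integrand_le; lra.
Qed.

Lemma Gamma_mul_Rpower_le A q :
  0 < A -> 0 <= q -> Gamma (2 * A + 1) * Rpower A q <= 2 * Gamma (2 * A + q + 1).
Proof.
  intros HA Hq.
  assert (HAq : 0 < Rpower A q) by apply exp_pos.
  apply (Rmult_le_reg_r (/ Rpower A q)); [now apply Rinv_0_lt_compat |].
  rewrite Rmult_assoc, Rinv_r, Rmult_1_r by lra.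
  apply Gamma_le; [lra |]. intros a b Hab.
  replace (2 * A + 1 - 1) with (2 * A) by ring.
  set (B := Rmax b (2 * A)).
  assert (HbB : b <= B) by apply Rmax_l.
  assert (HAB : 2 * A <= B) by apply Rmax_r.
  pose proof (RInt_gamma_integrand_le_superinterval (2 * A) a a b B ltac:(lra) ltac:(lra) HbB).
  pose proof (RInt_gamma_integrand_le_twice_tail A a B HA ltac:(lra) HAB).
  pose proof (Rpower_mul_RInt_gamma_integrand_le A (2 * A) q B ltac:(lra) Hq).
  pose proof (RInt_le_Gamma (2 * A + q + 1) A B ltac:(lra) ltac:(lra)) as HGamma.
  replace (2 * A + q + 1 - 1) with (2 * A + q) in HGamma by ring.
  apply (Rmult_le_reg_l (Rpower A q)); [exact HAq |].
  replace (Rpower A q * (2 * Gamma (2 * A + q + 1) * / Rpower A q))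
    with (2 * Gamma (2 * A + q + 1)) by (field; lra).
  nra.
Qed.

Lemma nq_ge_Rpower q k :
  0 < q -> Rpower (q / 2) q * Rpower (INR (S k)) q / 2 <= nq q (S (S k)).
Proof.
  intros Hq. unfold nq.
  assert (Hk : 0 < INR (S k)) by (apply lt_0_INR; lia).
  set (x := INR (S k) * q).
  assert (Hx : 0 < x) by (apply Rmult_lt_0_compat; assumption).
  pose proof (Gamma_pos (x + 1) ltac:(lra)) as HG.
  pose proof (Gamma_mul_Rpower_le (x / 2) q ltac:(lra) ltac:(lra)) as Hkey.
  replace (2 * (x / 2) + 1) with (x + 1) in Hkey by field.
  replace (2 * (x / 2) + q + 1) with (INR (S (S k)) * q + 1) in Hkey
    by (unfold x; rewrite (S_INR (S k)); field).
  rewrite Rpower_mult_distr by lra.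
  replace (q / 2 * INR (S k)) with (x / 2) by (unfold x; field).
  apply (Rmult_le_reg_r (Gamma (x + 1))); [exact HG |].
  replace (Gamma (INR (S (S k)) * q + 1) / Gamma (x + 1) * Gamma (x + 1))
    with (Gamma (INR (S (S k)) * q + 1)) by (field; lra).
  lra.
Qed.

Lemma sqr_le_exp_Rpower q b :
  0 < q -> 0 < b -> exists K, forall m, 0 < m -> m * m <= exp K * exp (b * Rpower m q).
Proof.
  intros Hq Hb. set (c := 2 / (q * b)).
  assert (Hc : 0 < c) by (apply Rdiv_lt_0_compat; nra).
  exists (2 / q * (ln c - 1)). intros m Hm.
  assert (Hy : 0 < Rpower m q) by apply exp_pos.
  assert (Hlny : ln (Rpower m q) = q * ln m) by apply ln_exp.
  pose proof (ln_le_div_add_ln c (Rpower m q) Hc Hy) as Hln.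
  rewrite <- exp_plus, <- (exp_ln m Hm), <- exp_plus, exp_ln by exact Hm.
  apply exp_le_compat.
  assert (Hscale : 2 / q * (Rpower m q / c + ln c - 1) = b * Rpower m q + 2 / q * (ln c - 1))
    by (unfold c; field; split; lra).
  assert (2 / q * ln (Rpower m q) <= 2 / q * (Rpower m q / c + ln c - 1))
    by (apply Rmult_le_compat_l; [apply Rlt_le, Rdiv_lt_0_compat |]; lra).
  rewrite Hlny in *. replace (2 / q * (q * ln m)) with (ln m + ln m) in * by (field; lra).
  lra.
Qed.

Lemma sum_inv_mul_succ N :
  sum_f_R0 (fun k => / (INR (S k) * INR (S (S k)))) N = 1 - / INR (S (S N)).
Proof.
  induction N as [| N IH]; [simpl; field |].
  rewrite tech5, IH. rewrite !S_INR. pose proof (pos_INR N). field. lra.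
Qed.

Lemma ex_series_inv_mul_succ : ex_series (fun k => / (INR (S k) * INR (S (S k)))).
Proof.
  apply ex_series_Reals_1. exists 1. apply is_lim_seq_Reals.
  apply is_lim_seq_ext with (fun N => 1 - / INR (N + 2)).
  { intros N. rewrite sum_inv_mul_succ. do 3 f_equal. lia. }
  assert (Hinv : is_lim_seq (fun N => / INR (N + 2)) 0).
  { apply (is_lim_seq_incr_n (fun n => / INR n) 2 0).
    replace (Finite 0) with (Rbar_inv p_infty) by reflexivity.
    apply is_lim_seq_inv; [apply is_lim_seq_INR | discriminate]. }
  pose proof (is_lim_seq_minus' _ _ 1 0 (is_lim_seq_const 1) Hinv) as Hlim.
  rewrite Rminus_0_r in Hlim. exact Hlim.
Qed.

Lemma ex_series_exp_neg_Rpower q b :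
  0 < q -> 0 < b -> ex_series (fun k => exp (- (b * Rpower (INR (S k)) q))).
Proof.
  intros Hq Hb. destruct (sqr_le_exp_Rpower q b Hq Hb) as [K HK].
  apply (@ex_series_le R_AbsRing R_CompleteNormedModule _
    (fun k => / (INR (S k) * INR (S (S k))) * (2 * exp K))).
  2: apply ex_series_scal_r, ex_series_inv_mul_succ.
  intros k. rewrite (S_INR (S k)). set (m := INR (S k)).
  assert (Hm : 1 <= m) by (unfold m; rewrite S_INR; pose proof (pos_INR k); lra).
  change (norm (exp (- (b * Rpower m q)))) with (Rabs (exp (- (b * Rpower m q)))).
  rewrite Rabs_pos_eq, exp_Ropp by apply Rlt_le, exp_pos.
  specialize (HK m ltac:(lra)).
  pose proof (exp_pos K). pose proof (exp_pos (b * Rpower m q)).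
  (* [m (m + 1) <= 2 m^2 <= 2 e^K e^(b m^q)] *)
  apply (Rmult_le_reg_r (exp (b * Rpower m q) * (m * (m + 1)))); [nra |].
  replace (/ exp (b * Rpower m q) * (exp (b * Rpower m q) * (m * (m + 1))))
    with (m * (m + 1)) by (field; lra).
  replace (/ (m * (m + 1)) * (2 * exp K) * (exp (b * Rpower m q) * (m * (m + 1))))
    with (2 * (exp K * exp (b * Rpower m q))) by (field; lra).
  nra.
Qed.

Theorem mainTheorem1 (q s : R) (hq : 0 < q) (hs : 0 < s) :
  ex_series (fun n : nat => exp (- s * nq q n)).
Proof.
  apply (ex_series_incr_n _ 2).
  set (c := Rpower (q / 2) q / 2).
  assert (Hc : 0 < c) by (apply Rdiv_lt_0_compat; [apply exp_pos | lra]).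
  apply (@ex_series_le R_AbsRing R_CompleteNormedModule _
    (fun k => exp (- (s * c * Rpower (INR (S k)) q)))).
  2: apply ex_series_exp_neg_Rpower; [exact hq | nra].
  intros k. change (2 + k)%nat with (S (S k)).
  change (norm (exp (- s * nq q (S (S k))))) with (Rabs (exp (- s * nq q (S (S k))))).
  rewrite Rabs_pos_eq by apply Rlt_le, exp_pos.
  apply exp_le_compat.
  pose proof (nq_ge_Rpower q k hq) as Hnq.
  assert (Hscaled : s * (c * Rpower (INR (S k)) q) <= s * nq q (S (S k)))
    by (apply Rmult_le_compat_l; unfold c; lra).
  lra.
Qed.
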